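(* Let $p\ge1$, $m=2p$, $N>M\ge0$, let $\beta(0),\dots,\beta(N)$ be $p\times m$ matrices with $\beta(k)J\beta(k)^*=I_p$, put $C_k=2K^*\beta(k)^*\beta(k)K-j$, and consider the system $W_{k+1}(\lambda)-W_k(\lambda)=-\frac{i}{\lambda}jC_kW_k(\lambda)$, $W_0=I_m$. Then $\mathcal N(N)\subset\mathcal N(M)$.
   Context: $\mathbb C_-$ is the open lower half-plane; $j=\mathrm{diag}(I_p,-I_p)$, $J=\begin{bmatrix}0&I_p\\ I_p&0\end{bmatrix}$, $K=\frac1{\sqrt2}\begin{bmatrix}I_p&-I_p\\ I_p&I_p\end{bmatrix}$. For $L\le N$ let $\mathcal W(L,\lambda)=\{\mathcal W_{ij}(L,\lambda)\}_{i,j=1}^2=KW_{L+1}(\bar\lambda)^*$ ($p\times p$ blocks), and let $\mathcal N(L)$ be the set of $p\times p$ matrix functions $\varphi$ holomorphic in $\mathbb C_-$ of the form $\varphi=i(\mathcal W_{21}(L,\cdot)R+\mathcal W_{22}(L,\cdot)Q)(\mathcal W_{11}(L,\cdot)R+\mathcal W_{12}(L,\cdot)Q)^{-1}$, where $R,Q$ are $p\times p$ matrix functions meromorphic in $\mathbb C_-$, well defined at $\lambda=-i$, with $R^*R+Q^*Q>0$ and $R^*R\le Q^*Q$ (Weyl functions on the interval $0\le k\le L$). *)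

From HB Require Import structures.
From mathcomp Require Import all_boot all_order all_algebra.
From mathcomp Require Import reals.
From mathcomp Require Import complex.
Set Implicit Arguments. Unset Strict Implicit. Unset Printing Implicit Defensive.
Import Order.TTheory GRing.Theory Num.Theory.
Local Open Scope ring_scope.
Local Open Scope complex_scope.

Section Defs.
Variable R : realType.
Local Notation C := R[i].

Definition adjmx m n (A : 'M[C]_(m, n)) : 'M[C]_(n, m) := (map_mx Num.conj A)^T.

Definition lowerHP (z : C) : Prop := complex.Im z < 0.

Definition mx_holo_at m n (f : C -> 'M[C]_(m, n)) (z : C) : Prop :=
  exists D : 'M[C]_(m, n), forall e : R, 0 < e ->
    exists d : R, 0 < d /\ forall w : C, `|w - z| < d%:C ->
      forall i j, `|f w i j - f z i j - (w - z) * D i j| <= e%:C * `|w - z|.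

Definition mx_holo_on m n (Dom : C -> Prop) (f : C -> 'M[C]_(m, n)) : Prop :=
  forall z, Dom z -> mx_holo_at f z.

(* f is holomorphic in a neighbourhood of z ("well defined" at z) *)
Definition mx_regular_at m n (f : C -> 'M[C]_(m, n)) (z : C) : Prop :=
  exists r : R, 0 < r /\ forall w : C, `|w - z| < r%:C -> mx_holo_at f w.

Definition mx_mero_on m n (Dom : C -> Prop) (f : C -> 'M[C]_(m, n)) : Prop :=
  forall z0, Dom z0 -> exists (k : nat) (r : R) (G : C -> 'M[C]_(m, n)),
    0 < r /\ (forall w : C, `|w - z0| < r%:C -> mx_holo_at G w) /\
    (forall w : C, 0 < `|w - z0| < r%:C -> f w = (w - z0) ^- k *: G w).

Definition discrete_in (Dom S : C -> Prop) : Prop :=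
  forall z, Dom z -> exists r : R, 0 < r /\
    forall w, S w -> 0 < `|w - z| < r%:C -> False.

Definition posdefmx n (H : 'M[C]_n) : Prop :=
  forall v : 'cV[C]_n, v != 0 -> 0 < (adjmx v *m H *m v) 0 0.
Definition psdmx n (H : 'M[C]_n) : Prop :=
  forall v : 'cV[C]_n, 0 <= (adjmx v *m H *m v) 0 0.

Variable p : nat.

Definition jmx : 'M[C]_(p + p) := block_mx 1%:M 0 0 (- 1%:M).
Definition Jmx : 'M[C]_(p + p) := block_mx 0 1%:M 1%:M 0.
Definition Kmx : 'M[C]_(p + p) :=
  (sqrtC (2 : C))^-1 *: block_mx 1%:M (- 1%:M) 1%:M 1%:M.

Variable beta : nat -> 'M[C]_(p, p + p).

Definition Cmx (k : nat) : 'M[C]_(p + p) :=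
  2%:R *: (adjmx Kmx *m adjmx (beta k) *m beta k *m Kmx) - jmx.

Fixpoint Wmx (k : nat) (l : C) : 'M[C]_(p + p) :=
  match k with
  | 0 => 1%:M
  | k'.+1 => Wmx k' l - ('i / l) *: (jmx *m Cmx k' *m Wmx k' l)
  end.

Definition calW (L : nat) (l : C) : 'M[C]_(p + p) :=
  Kmx *m adjmx (Wmx L.+1 (Num.conj l)).

Definition WeylSet (L : nat) (phi : C -> 'M[C]_p) : Prop :=
  mx_holo_on lowerHP phi /\
  exists Rf Qf : C -> 'M[C]_p,
    mx_mero_on lowerHP Rf /\ mx_mero_on lowerHP Qf /\
    mx_regular_at Rf (- 'i) /\ mx_regular_at Qf (- 'i) /\
    (forall l, lowerHP l -> mx_regular_at Rf l -> mx_regular_at Qf l ->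
       posdefmx (adjmx (Rf l) *m Rf l + adjmx (Qf l) *m Qf l) /\
       psdmx (adjmx (Qf l) *m Qf l - adjmx (Rf l) *m Rf l)) /\
    exists S : C -> Prop, discrete_in lowerHP S /\
      forall l, lowerHP l -> ~ S l ->
        mx_regular_at Rf l /\ mx_regular_at Qf l /\
        let D := ulsubmx (calW L l) *m Rf l + ursubmx (calW L l) *m Qf l in
        let U := dlsubmx (calW L l) *m Rf l + drsubmx (calW L l) *m Qf l in
        D \in unitmx /\ phi l = 'i *: (U *m invmx D).

End Defs.

From HB Require Import structures.
From mathcomp Require Import all_boot all_order all_algebra.
From mathcomp Require Import reals complex.
From mathcomp Require Import boolp functions filter topology normedtype derive.
From mathcomp Require Import ring lra.
Import Order.TTheory GRing.Theory Num.Theory.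
Import numFieldNormedType.Exports.
Local Open Scope ring_scope.
Local Open Scope complex_scope.
Set Implicit Arguments. Unset Strict Implicit. Unset Printing Implicit Defensive.

(* The recursion gives W_{k+1}(conj l)^* = W_k(conj l)^* F_k(l) with
   F_k(l) = I + (i/l) C_k j, hence calW(N, l) = calW(M, l) P(l) for the transfer matrix
   P = F_{M+1} ... F_N.  If phi is produced on [0, N] by the pair (R; Q), it is therefore
   produced on [0, M] by the pair P (R; Q), with the same exceptional set.  The normalization
   beta J beta^* = I gives (C_k j)^2 = I, so F_k(l)^-1 = l^2/(l^2 + 1) (I - (i/l) C_k j):
   P is holomorphic and invertible off {0, i, -i}, which carries meromorphy and regularity
   in both directions.  Finally, with a = i/l,
     (F_k u)^* j (F_k u) = |1 - a|^2 u^* j u + 2 (a + conj a) |beta_k K j u|^2,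
   and Re a < 0 in the lower half-plane, so F_k maps the cone u^* j u <= 0 injectively into
   itself; this is what preserves R^*R + Q^*Q > 0 and R^*R <= Q^*Q. *)

Section ComplexDifferentiability.
Variable R : realType.
Local Notation C := R[i].

Lemma gt0_complexE (e : C) : 0 < e -> 0 < complex.Re e /\ (complex.Re e)%:C = e.
Proof.
move=> e0; split; first by move: e0; rewrite ltcE => /andP[].
by apply: RRe_real; exact: gtr0_real.
Qed.

(* R[i] is a normed module over itself only through the alias R[i]^o, whence the casts
   to C^o. *)
Lemma near_complexP (z : C) (P : C -> Prop) :
  (\forall w \near (z : C^o), P w) <->
  exists r : R, 0 < r /\ forall w, `|w - z| < r%:C -> P w.
Proof.
rewrite -nbhs_normE; split.
- case=> e /gt0_complexE [e0 eE] zeP; exists (complex.Re e); split => // w.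
  by rewrite eE distrC => /zeP.
- case=> r [r0 rP]; exists r%:C; first by rewrite /= ltcR.
  by move=> w /=; rewrite distrC => /rP.
Qed.

Lemma near_neq (c l : C) : l != c -> \forall w \near (l : C^o), w != c.
Proof.
move=> lc; apply/nbhs_normP; exists `|l - c|; first by rewrite /= normr_gt0 subr_eq0.
by move=> w /=; apply: contraTneq => ->; rewrite ltxx.
Qed.

Lemma derivable_complexP (g : C -> C) (z : C) :
  derivable (g : C^o -> C^o) z 1 <-> exists d : C, forall e : R, 0 < e ->
    exists r : R, 0 < r /\ forall w, `|w - z| < r%:C ->
      `|g w - g z - (w - z) * d| <= e%:C * `|w - z|.
Proof.
have quotE (d h : C) : h != 0 ->
    `|g (h + z) - g z - h * d| = `|h| * `|d - h^-1 * (g (h + z) - g z)|.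
  by move=> h0; rewrite -normrM -normrN; congr `|_|; field.
have regE (h x : C^o) : h^-1 *: ((g \o shift z) h%:A - x) = h^-1 * (g (h + z) - x).
  by rewrite /= /GRing.scale /= mulr1.
rewrite /derivable cvg_ex; split.
- case=> d /cvgrPdist_le dP; exists d => e e0.
  have /dP : 0 < e%:C by rewrite ltcR.
  rewrite near_withinE => /near_complexP[r [r0 rP]]; exists r; split => // w wz.
  have [->|wz0] := eqVneq w z; first by rewrite !subrr mul0r subr0 normr0 mulr0.
  have h0 : w - z != 0 by rewrite subr_eq0.
  have hw : w = (w - z) + z by rewrite subrK.
  rewrite [in g w]hw quotE // mulrC ler_pM2r ?normr_gt0 //.
  by have := rP (w - z); rewrite subr0 regE; apply.
- case=> d dP; exists d; apply/cvgrPdist_le => eps /gt0_complexE [e0 eE].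
  have [r [r0 rP]] := dP _ e0.
  rewrite near_withinE; apply/near_complexP; exists r; split => // h.
  rewrite subr0 regE => hr h0.
  have := rP (h + z); rewrite addrK => /(_ hr).
  by rewrite quotE // mulrC ler_pM2r ?normr_gt0 // eE.
Qed.

Lemma mx_holo_atP m n (f : C -> 'M[C]_(m, n)) z :
  mx_holo_at f z <-> forall i j, derivable (fun w : C^o => f w i j : C^o) z 1.
Proof.
split.
- case=> D HD i j; apply/derivable_complexP; exists (D i j) => e /HD[r [r0 rP]].
  by exists r; split => // w /rP.
- move=> fd; have /choice[d dP] : forall ij : 'I_m * 'I_n, exists d : C,
      forall e : R, 0 < e -> \forall w \near (z : C^o),
        `|f w ij.1 ij.2 - f z ij.1 ij.2 - (w - z) * d| <= e%:C * `|w - z|.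
    move=> [i j]; have /derivable_complexP[d dP] := fd i j.
    by exists d => e /dP rP; apply/near_complexP.
  exists (\matrix_(i, j) d (i, j)) => e e0.
  have /near_complexP[r [r0 rP]] : \forall w \near (z : C^o), forall ij : 'I_m * 'I_n,
      `|f w ij.1 ij.2 - f z ij.1 ij.2 - (w - z) * d ij| <= e%:C * `|w - z|.
    exact: (filter_forall _ (fun ij => dP ij e e0)).
  by exists r; split => // w /rP fw i j; rewrite mxE; exact: (fw (i, j)).
Qed.

Section HoloClosure.
Variable z : C.

Lemma mx_holo_at_cst m n (A : 'M[C]_(m, n)) : mx_holo_at (fun=> A) z.
Proof. by apply/mx_holo_atP => i j; exact: derivable_cst. Qed.

Lemma mx_holo_atD m n (f g : C -> 'M[C]_(m, n)) :
  mx_holo_at f z -> mx_holo_at g z -> mx_holo_at (fun w => f w + g w) z.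
Proof.
move=> /mx_holo_atP fz /mx_holo_atP gz; apply/mx_holo_atP => i j.
have -> : (fun w : C^o => (f w + g w) i j : C^o) =
    (fun w : C^o => f w i j : C^o) + (fun w => g w i j).
  by apply/funext => w; rewrite mxE.
exact: derivableD.
Qed.

Lemma mx_holo_atM m n k (f : C -> 'M[C]_(m, n)) (g : C -> 'M[C]_(n, k)) :
  mx_holo_at f z -> mx_holo_at g z -> mx_holo_at (fun w => f w *m g w) z.
Proof.
move=> /mx_holo_atP fz /mx_holo_atP gz; apply/mx_holo_atP => i j.
have -> : (fun w : C^o => (f w *m g w) i j : C^o) =
    \sum_(l < n) ((fun w : C^o => f w i l : C^o) * (fun w => g w l j)).
  by apply/funext => w; rewrite mxE fct_sumE.
by apply: derivable_sum => l; exact: derivableM.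
Qed.

Lemma mx_holo_atZ m n (g : C -> C) (f : C -> 'M[C]_(m, n)) :
  derivable (g : C^o -> C^o) z 1 -> mx_holo_at f z ->
  mx_holo_at (fun w => g w *: f w) z.
Proof.
move=> gz /mx_holo_atP fz; apply/mx_holo_atP => i j.
have -> : (fun w : C^o => (g w *: f w) i j : C^o) =
    (fun w : C^o => g w : C^o) * (fun w : C^o => f w i j : C^o).
  by apply/funext => w; rewrite mxE.
exact: (derivableM gz (fz i j)).
Qed.

Lemma mx_holo_at_col m1 m2 n (f : C -> 'M[C]_(m1, n)) (g : C -> 'M[C]_(m2, n)) :
  mx_holo_at f z -> mx_holo_at g z -> mx_holo_at (fun w => col_mx (f w) (g w)) z.
Proof.
move=> /mx_holo_atP fz /mx_holo_atP gz; apply/mx_holo_atP => i j.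
case: (split_ordP i) => k ->.
- have -> : (fun w : C^o => col_mx (f w) (g w) (lshift m2 k) j : C^o) =
      (fun w : C^o => f w k j : C^o) by apply/funext => w; rewrite col_mxEu.
  exact: fz.
- have -> : (fun w : C^o => col_mx (f w) (g w) (rshift m1 k) j : C^o) =
      (fun w : C^o => g w k j : C^o) by apply/funext => w; rewrite col_mxEd.
  exact: gz.
Qed.

Lemma mx_holo_at_usub m1 m2 n (f : C -> 'M[C]_(m1 + m2, n)) :
  mx_holo_at f z -> mx_holo_at (fun w => usubmx (f w)) z.
Proof.
move=> /mx_holo_atP fz; apply/mx_holo_atP => i j.
have -> : (fun w : C^o => usubmx (f w) i j : C^o) =
    (fun w : C^o => f w (lshift m2 i) j : C^o) by apply/funext => w; rewrite mxE.
exact: fz.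
Qed.

Lemma mx_holo_at_dsub m1 m2 n (f : C -> 'M[C]_(m1 + m2, n)) :
  mx_holo_at f z -> mx_holo_at (fun w => dsubmx (f w)) z.
Proof.
move=> /mx_holo_atP fz; apply/mx_holo_atP => i j.
have -> : (fun w : C^o => dsubmx (f w) i j : C^o) =
    (fun w : C^o => f w (rshift m1 i) j : C^o) by apply/funext => w; rewrite mxE.
exact: fz.
Qed.

Lemma mx_holo_at_near_eq m n (f g : C -> 'M[C]_(m, n)) :
  (\forall w \near (z : C^o), f w = g w) -> mx_holo_at f z -> mx_holo_at g z.
Proof.
move=> fg /mx_holo_atP fz; apply/mx_holo_atP => i j.
by apply: near_eq_derivable (fz i j); apply: filterS fg => w ->.
Qed.
End HoloClosure.

Lemma mx_regular_atP m n (f : C -> 'M[C]_(m, n)) z :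
  mx_regular_at f z <-> \forall w \near (z : C^o), mx_holo_at f w.
Proof. exact: iff_sym (near_complexP _ _). Qed.

Lemma mx_regular_at_near_eq m n (f g : C -> 'M[C]_(m, n)) z :
  (\forall w \near (z : C^o), f w = g w) -> mx_regular_at f z -> mx_regular_at g z.
Proof.
move=> /nbhs_interior fg /mx_regular_atP fz; apply/mx_regular_atP.
by apply: filterS2 fg fz => w; exact: mx_holo_at_near_eq.
Qed.

Lemma mx_regular_atM m n k (f : C -> 'M[C]_(m, n)) (g : C -> 'M[C]_(n, k)) z :
  mx_regular_at f z -> mx_regular_at g z -> mx_regular_at (fun w => f w *m g w) z.
Proof.
move=> /mx_regular_atP fz /mx_regular_atP gz; apply/mx_regular_atP.
by apply: filterS2 fz gz => w; exact: mx_holo_atM.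
Qed.

Lemma mx_regular_at_col m1 m2 n (f : C -> 'M[C]_(m1, n)) (g : C -> 'M[C]_(m2, n)) z :
  mx_regular_at f z -> mx_regular_at g z ->
  mx_regular_at (fun w => col_mx (f w) (g w)) z.
Proof.
move=> /mx_regular_atP fz /mx_regular_atP gz; apply/mx_regular_atP.
by apply: filterS2 fz gz => w; exact: mx_holo_at_col.
Qed.

Lemma mx_regular_at_usub m1 m2 n (f : C -> 'M[C]_(m1 + m2, n)) z :
  mx_regular_at f z -> mx_regular_at (fun w => usubmx (f w)) z.
Proof.
move=> /mx_regular_atP fz; apply/mx_regular_atP.
by apply: filterS fz => w; exact: mx_holo_at_usub.
Qed.

Lemma mx_regular_at_dsub m1 m2 n (f : C -> 'M[C]_(m1 + m2, n)) z :
  mx_regular_at f z -> mx_regular_at (fun w => dsubmx (f w)) z.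
Proof.
move=> /mx_regular_atP fz; apply/mx_regular_atP.
by apply: filterS fz => w; exact: mx_holo_at_dsub.
Qed.

Lemma mx_mero_onP m n (Dom : C -> Prop) (f : C -> 'M[C]_(m, n)) :
  mx_mero_on Dom f <-> forall z0, Dom z0 -> exists (k : nat) (G : C -> 'M[C]_(m, n)),
    \forall w \near (z0 : C^o), mx_holo_at G w /\ (w != z0 -> f w = (w - z0) ^- k *: G w).
Proof.
split => fm z0 /fm.
- case=> k [r [G [r0 [GH fG]]]]; exists k, G; apply/near_complexP.
  exists r; split => // w wr; split; first exact: GH.
  by move=> wz; apply: fG; rewrite normr_gt0 subr_eq0 wz.
- case=> k [G /near_complexP[r [r0 rP]]]; exists k, r, G; split => //.
  split=> [w /rP[]//|w /andP[wz0 wr]].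
  by apply: (rP w wr).2; rewrite -subr_eq0 -normr_gt0.
Qed.

Lemma lowerHP_neq0 (l : C) : lowerHP l -> l != 0.
Proof. by apply: contraTneq => ->; rewrite /lowerHP ltxx. Qed.

Lemma lowerHP_neqi (l : C) : lowerHP l -> l != 'i.
Proof. by apply: contraTneq => ->; rewrite /lowerHP /= ltr10. Qed.

Lemma lowerHP_Ni : lowerHP (- 'i : C).
Proof. by rewrite /lowerHP /= ltrN10. Qed.

Lemma derivable_subC (c w : C) : derivable (fun v : C^o => v - c : C^o) w 1.
Proof. by apply: derivableB; [exact: derivable_id | exact: derivable_cst]. Qed.

Lemma derivable_subX (c w : C) k : derivable (fun v : C^o => (v - c) ^+ k : C^o) w 1.
Proof.
elim: k => [|k IH]; first exact: derivable_cst.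
have -> : (fun v : C^o => (v - c) ^+ k.+1 : C^o) =
    (fun v : C^o => v - c : C^o) * (fun v : C^o => (v - c) ^+ k : C^o).
  by apply/funext => v; rewrite exprS.
by apply: derivableM; [exact: derivable_subC | exact: IH].
Qed.

Lemma derivable_subV (c w : C) : w != c -> derivable (fun v : C^o => (v - c)^-1 : C^o) w 1.
Proof.
move=> wc; apply: (@derivableV _ _ (fun v : C^o => v - c : C^o)).
  by rewrite subr_eq0.
exact: derivable_subC.
Qed.

Lemma derivable_cdiv (a z : C) : z != 0 -> derivable (fun w : C^o => a / w : C^o) z 1.
Proof.
move=> z0.
have -> : (fun w : C^o => a / w : C^o) =
    (fun _ : C^o => a : C^o) * (fun w : C^o => (w - 0)^-1 : C^o).
  by rewrite mulrfctE; apply/funext => w; rewrite subr0.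
by apply: derivableM; [exact: derivable_cst | exact: derivable_subV].
Qed.

Section Meromorphic.
Variable Dom : C -> Prop.

Lemma mx_mero_onM m n k (A : C -> 'M[C]_(m, n)) (f : C -> 'M[C]_(n, k)) :
  (forall z, Dom z -> mx_regular_at A z) -> mx_mero_on Dom f ->
  mx_mero_on Dom (fun w => A w *m f w).
Proof.
move=> Areg /mx_mero_onP fm; apply/mx_mero_onP => z0 z0D.
have /mx_regular_atP Az0 := Areg z0 z0D; have [k0 [G Gz0]] := fm z0 z0D.
exists k0, (fun w => A w *m G w).
apply: filterS2 Az0 Gz0 => w Aw [Gw fG]; split; first exact: mx_holo_atM.
by move=> wz0; rewrite fG // scalemxAr.
Qed.

Lemma mx_mero_on_col m1 m2 n (f : C -> 'M[C]_(m1, n)) (g : C -> 'M[C]_(m2, n)) :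
  mx_mero_on Dom f -> mx_mero_on Dom g -> mx_mero_on Dom (fun w => col_mx (f w) (g w)).
Proof.
move=> /mx_mero_onP fm /mx_mero_onP gm; apply/mx_mero_onP => z0 z0D.
have [k1 [F Fz0]] := fm z0 z0D; have [k2 [G Gz0]] := gm z0 z0D.
exists (k1 + k2)%N, (fun w => col_mx ((w - z0) ^+ k2 *: F w) ((w - z0) ^+ k1 *: G w)).
apply: filterS2 Fz0 Gz0 => w [Fw fF] [Gw gG]; split.
  by apply: mx_holo_at_col; apply: mx_holo_atZ => //; exact: derivable_subX.
move=> wz0; have wz : w - z0 != 0 by rewrite subr_eq0.
have expK (a b : nat) : (w - z0) ^- (a + b) * (w - z0) ^+ b = (w - z0) ^- a.
  by rewrite exprD invfM -mulrA mulVf ?mulr1 // expf_neq0.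
by rewrite fF // gG // scale_col_mx !scalerA expK [(k1 + k2)%N]addnC expK.
Qed.

Lemma mx_mero_on_usub m1 m2 n (f : C -> 'M[C]_(m1 + m2, n)) :
  mx_mero_on Dom f -> mx_mero_on Dom (fun w => usubmx (f w)).
Proof.
move=> /mx_mero_onP fm; apply/mx_mero_onP => z0 /fm[k [G Gz0]].
exists k, (fun w => usubmx (G w)); apply: filterS Gz0 => w [Gw fG].
split; first exact: mx_holo_at_usub.
by move=> wz0; rewrite fG //; apply/matrixP => i j; rewrite !mxE.
Qed.

Lemma mx_mero_on_dsub m1 m2 n (f : C -> 'M[C]_(m1 + m2, n)) :
  mx_mero_on Dom f -> mx_mero_on Dom (fun w => dsubmx (f w)).
Proof.
move=> /mx_mero_onP fm; apply/mx_mero_onP => z0 /fm[k [G Gz0]].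
exists k, (fun w => dsubmx (G w)); apply: filterS Gz0 => w [Gw fG].
split; first exact: mx_holo_at_dsub.
by move=> wz0; rewrite fG //; apply/matrixP => i j; rewrite !mxE.
Qed.

End Meromorphic.

End ComplexDifferentiability.

Section BlockProducts.
Variable R : pzRingType.

Lemma usubmx_mul_col m1 m2 n1 n2 k (A : 'M[R]_(m1 + m2, n1 + n2))
    (X : 'M[R]_(n1, k)) (Y : 'M[R]_(n2, k)) :
  ulsubmx A *m X + ursubmx A *m Y = usubmx (A *m col_mx X Y).
Proof. by rewrite -{3}[A]submxK mul_block_col col_mxKu. Qed.

Lemma dsubmx_mul_col m1 m2 n1 n2 k (A : 'M[R]_(m1 + m2, n1 + n2))
    (X : 'M[R]_(n1, k)) (Y : 'M[R]_(n2, k)) :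
  dlsubmx A *m X + drsubmx A *m Y = dsubmx (A *m col_mx X Y).
Proof. by rewrite -{3}[A]submxK mul_block_col col_mxKd. Qed.

End BlockProducts.

Section Adjoint.
Variable R : realType.
Local Notation C := R[i].

Lemma adjmxM m n k (A : 'M[C]_(m, n)) (B : 'M[C]_(n, k)) :
  adjmx (A *m B) = adjmx B *m adjmx A.
Proof. by rewrite /adjmx map_mxM trmx_mul. Qed.

Lemma adjmxD m n (A B : 'M[C]_(m, n)) : adjmx (A + B) = adjmx A + adjmx B.
Proof. by rewrite /adjmx map_mxD linearD. Qed.

Lemma adjmxN m n (A : 'M[C]_(m, n)) : adjmx (- A) = - adjmx A.
Proof. by rewrite /adjmx map_mxN linearN. Qed.

Lemma adjmxB m n (A B : 'M[C]_(m, n)) : adjmx (A - B) = adjmx A - adjmx B.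
Proof. by rewrite adjmxD adjmxN. Qed.

Lemma adjmxZ m n (c : C) (A : 'M[C]_(m, n)) : adjmx (c *: A) = Num.conj c *: adjmx A.
Proof. by rewrite /adjmx map_mxZ linearZ. Qed.

Lemma adjmx1 n : adjmx (1%:M : 'M[C]_n) = 1%:M.
Proof. by rewrite /adjmx map_mx1 trmx1. Qed.

Lemma adjmx0 m n : adjmx (0 : 'M[C]_(m, n)) = 0.
Proof. by rewrite /adjmx map_mx0 trmx0. Qed.

Lemma adjmxK m n (A : 'M[C]_(m, n)) : adjmx (adjmx A) = A.
Proof. by apply/matrixP => i j; rewrite !mxE conjCK. Qed.

Lemma adjmx_block m1 m2 n1 n2 (A : 'M[C]_(m1, n1)) (B : 'M[C]_(m1, n2))
    (D : 'M[C]_(m2, n1)) (E : 'M[C]_(m2, n2)) :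
  adjmx (block_mx A B D E) = block_mx (adjmx A) (adjmx D) (adjmx B) (adjmx E).
Proof. by rewrite /adjmx map_block_mx tr_block_mx. Qed.

Lemma adjmx_col m1 m2 n (A : 'M[C]_(m1, n)) (B : 'M[C]_(m2, n)) :
  adjmx (col_mx A B) = row_mx (adjmx A) (adjmx B).
Proof. by rewrite /adjmx map_col_mx tr_col_mx. Qed.

Definition cnorm2 m (v : 'cV[C]_m) : C := (adjmx v *m v) 0 0.

Lemma cnorm2E m (v : 'cV[C]_m) : cnorm2 v = \sum_i `|v i 0| ^+ 2.
Proof. by rewrite /cnorm2 mxE; apply: eq_bigr => i _; rewrite !mxE normCK mulrC. Qed.

Lemma cnorm2_ge0 m (v : 'cV[C]_m) : 0 <= cnorm2 v.
Proof. by rewrite cnorm2E sumr_ge0 // => i _; rewrite exprn_ge0. Qed.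

Lemma cnorm2_eq0 m (v : 'cV[C]_m) : (cnorm2 v == 0) = (v == 0).
Proof.
apply/idP/eqP => [|->]; last by rewrite /cnorm2 adjmx0 mul0mx mxE.
rewrite cnorm2E psumr_eq0 => [/allP v0|i _]; last by rewrite exprn_ge0.
apply/matrixP => i k; rewrite ord1 mxE; apply/eqP.
by have := v0 i (mem_index_enum i); rewrite /= expf_eq0 normr_eq0.
Qed.

End Adjoint.

Section Transfer.
Variable R : realType.
Local Notation C := R[i].
Variable p : nat.
Variable beta : nat -> 'M[C]_(p, p + p).
Local Notation j := (jmx R p).
Local Notation K := (Kmx R p).
Local Notation Cm := (Cmx beta).
Local Notation normalized k := (beta k *m Jmx R p *m adjmx (beta k) = 1%:M).
Local Notation normalized_on M n := (forall k, (M < k <= M + n)%N -> normalized k).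

Lemma jmx_adj : adjmx j = j.
Proof. by rewrite /jmx adjmx_block adjmxN !adjmx1 !adjmx0. Qed.

Lemma jmx_sq : j *m j = 1%:M.
Proof.
rewrite /jmx mulmx_block !mulmx0 !mul0mx !mulmx1 !addr0 !add0r mulmxN mulNmx mulmx1.
by rewrite opprK -scalar_mx_block.
Qed.

Lemma Kmx_jmx : K *m j *m adjmx K = Jmx R p.
Proof.
rewrite /Kmx adjmxZ adjmx_block adjmxN !adjmx1.
set s := (sqrtC 2)^-1.
have sR : Num.conj s = s by apply/CrealP; rewrite realV realE sqrtC_ge0 ler0n.
have ss : s * s + s * s = 1 by rewrite /s -invfM -expr2 sqrtCK; field.
rewrite sR -!scalemxAl -scalemxAr scalerA /jmx /Jmx !mulmx_block.
rewrite !mulmx0 !addr0 !add0r !mulmxN !mulmx1 !opprK subrr.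
by rewrite scale_block_mx scaler0 scalerDr -scalerDl ss scale1r.
Qed.

Definition gamma k := beta k *m K.

Lemma CmxE k : Cm k = 2%:R *: (adjmx (gamma k) *m gamma k) - j.
Proof. by rewrite /Cmx /gamma adjmxM !mulmxA. Qed.

Lemma gamma_jmx k : normalized k -> gamma k *m j *m adjmx (gamma k) = 1%:M.
Proof. by move=> bJ; rewrite /gamma adjmxM !mulmxA -(mulmxA _ K) -(mulmxA _ (K *m j)) Kmx_jmx. Qed.

Lemma Cmx_adj k : adjmx (Cm k) = Cm k.
Proof.
by rewrite CmxE adjmxB adjmxZ adjmxM adjmxK jmx_adj (conj_Creal (@realn _ 2)).
Qed.

Lemma Cmx_jmx k : normalized k -> Cm k *m j *m Cm k = j.
Proof.
move=> /gamma_jmx gj; rewrite CmxE; set G := adjmx (gamma k) *m gamma k.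
have GjG : G *m j *m G = G.
  have -> : G *m j *m G = adjmx (gamma k) *m (gamma k *m j *m adjmx (gamma k)) *m gamma k.
    by rewrite !mulmxA.
  by rewrite gj mulmx1.
have E1 : (2%:R *: G - j) *m j = 2%:R *: (G *m j) - 1%:M.
  by rewrite mulmxBl -scalemxAl jmx_sq.
rewrite E1 mulmxBl !mulmxBr -!scalemxAl -!scalemxAr !mul1mx scalerA.
rewrite GjG -mulmxA jmx_sq mulmx1.
have -> : (2%:R * 2%:R) *: G = 2%:R *: G + 2%:R *: G :> 'M[C]_(p + p).
  by rewrite -scalerDl; congr (_ *: _); ring.
by rewrite addrK opprB addrC subrK.
Qed.

Lemma Cmx_jmx_invol k : normalized k -> (Cm k *m j) *m (Cm k *m j) = 1%:M.
Proof. by move=> bJ; rewrite !mulmxA (Cmx_jmx bJ) jmx_sq. Qed.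

Definition step k (l : C) : 'M[C]_(p + p) := 1%:M + ('i / l) *: (Cm k *m j).

Lemma adj_Wmx_step k l :
  adjmx (Wmx beta k.+1 (Num.conj l)) = adjmx (Wmx beta k (Num.conj l)) *m step k l.
Proof.
rewrite /=; set W := Wmx beta k (Num.conj l).
have -> : W - ('i / Num.conj l) *: (j *m Cm k *m W) =
    (1%:M - ('i / Num.conj l) *: (j *m Cm k)) *m W.
  by rewrite mulmxBl mul1mx -scalemxAl.
rewrite adjmxM adjmxB adjmx1 adjmxZ adjmxM Cmx_adj jmx_adj /step; congr (_ *m _).
have -> : Num.conj ('i / Num.conj l) = - ('i / l).
  rewrite fmorph_div /= conjCK -mulNr; congr (_ / _).
  by apply/eqP; rewrite eq_complex /= oppr0 !eqxx.
by rewrite scaleNr opprK.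
Qed.

Fixpoint transfer (M n : nat) (l : C) : 'M[C]_(p + p) :=
  if n is n'.+1 then transfer M n' l *m step (M + n').+1 l else 1%:M.

Lemma calW_step L l : calW beta L.+1 l = calW beta L l *m step L.+1 l.
Proof. by rewrite /calW -mulmxA; congr (_ *m _); exact: adj_Wmx_step. Qed.

Lemma calW_transfer M n l : calW beta (M + n) l = calW beta M l *m transfer M n l.
Proof.
elim: n => [|n IH]; first by rewrite addn0 mulmx1.
by rewrite addnS calW_step IH -mulmxA.
Qed.

Definition step_inv k (l : C) : 'M[C]_(p + p) :=
  (l ^+ 2 * ((l - 'i)^-1 * (l + 'i)^-1)) *: (1%:M - ('i / l) *: (Cm k *m j)).

Lemma step_invK k l : normalized k -> l != 0 -> l != 'i -> l != - 'i ->
  step_inv k l *m step k l = 1%:M.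
Proof.
move=> bJ l0 li lNi; rewrite /step_inv /step -scalemxAl.
set a := 'i / l; set X := Cm k *m j.
have -> : (1%:M - a *: X) *m (1%:M + a *: X) = (1 - a ^+ 2) *: 1%:M.
  rewrite mulmxBl !mulmxDr !mul1mx !mulmx1 -!scalemxAl -scalemxAr scalerA.
  by rewrite /X Cmx_jmx_invol // opprD addrA addrK scalerBl scale1r expr2.
have li' : l - 'i != 0 by rewrite subr_eq0.
have lNi' : l + 'i != 0 by rewrite -[X in _ + X]opprK subr_eq0.
rewrite scalerA (_ : _ * (1 - a ^+ 2) = 1) ?scale1r //.
by rewrite /a; field; rewrite l0 li' lNi'.
Qed.

Fixpoint transfer_inv (M n : nat) (l : C) : 'M[C]_(p + p) :=
  if n is n'.+1 then step_inv (M + n').+1 l *m transfer_inv M n' l else 1%:M.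

Lemma transfer_invK M n l : normalized_on M n ->
  l != 0 -> l != 'i -> l != - 'i -> transfer_inv M n l *m transfer M n l = 1%:M.
Proof.
move=> bJ l0 li lNi; elim: n bJ => [|n IH] bJ /=; first by rewrite mulmx1.
rewrite mulmxA -(mulmxA (step_inv _ l)) IH ?mulmx1 ?step_invK //.
  by apply: bJ; rewrite addnS ltnS leq_addr leqnn.
by move=> k /andP[Mk kn]; apply: bJ; rewrite Mk addnS ltnW.
Qed.

Definition jquad (u : 'cV[C]_(p + p)) : C := (adjmx u *m j *m u) 0 0.

Lemma jquad_step k (a : C) (u : 'cV[C]_(p + p)) : normalized k ->
  jquad ((1%:M + a *: (Cm k *m j)) *m u) =
  `|1 - a| ^+ 2 * jquad u + 2%:R * (a + Num.conj a) * cnorm2 (gamma k *m j *m u).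
Proof.
move=> bJ; set G := adjmx (gamma k) *m gamma k.
have entD (A B : 'M[C]_1) : (A + B) 0 0 = A 0 0 + B 0 0 by rewrite mxE.
have entN (A : 'M[C]_1) : (- A) 0 0 = - A 0 0 by rewrite mxE.
have entZ c (A : 'M[C]_1) : (c *: A) 0 0 = c * A 0 0 by rewrite mxE.
have gE : cnorm2 (gamma k *m j *m u) = (adjmx u *m (j *m G *m j) *m u) 0 0.
  by rewrite /cnorm2 /G !adjmxM jmx_adj !mulmxA.
have jCj : (adjmx u *m (j *m Cm k *m j) *m u) 0 0 =
    2%:R * cnorm2 (gamma k *m j *m u) - jquad u.
  have -> : j *m Cm k *m j = 2%:R *: (j *m G *m j) - j.
    by rewrite CmxE -/G mulmxBr mulmxBl -scalemxAr -scalemxAl jmx_sq mul1mx.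
  by rewrite mulmxBr mulmxBl -scalemxAr -scalemxAl entD entN entZ gE.
have jCjCj : (adjmx u *m (j *m Cm k *m j *m Cm k *m j) *m u) 0 0 = jquad u.
  have -> : j *m Cm k *m j *m Cm k *m j = j.
    have -> : j *m Cm k *m j *m Cm k *m j = j *m (Cm k *m j *m Cm k) *m j.
      by rewrite !mulmxA.
    by rewrite Cmx_jmx // jmx_sq mul1mx.
  by [].
rewrite /jquad in jCj jCjCj *.
have -> : adjmx ((1%:M + a *: (Cm k *m j)) *m u) =
    adjmx u + Num.conj a *: (adjmx u *m (j *m Cm k)).
  by rewrite adjmxM adjmxD adjmx1 adjmxZ adjmxM Cmx_adj jmx_adj mulmxDr mulmx1 -scalemxAr.
rewrite mulmxDl mul1mx -scalemxAl.
(* Abstracting j keeps the rewrites below from unfolding its block structure. *)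
move: jCj jCjCj; move: (Cm k) (gamma k) (jmx R p) => Ck Gk J0 jCj jCjCj.
rewrite !(mulmxDl, mulmxDr) !entD -!scalemxAl -!scalemxAr !entZ.
have -> : adjmx u *m J0 *m (Ck *m J0 *m u) = adjmx u *m (J0 *m Ck *m J0) *m u.
  by rewrite !mulmxA.
have -> : adjmx u *m (J0 *m Ck) *m J0 *m u = adjmx u *m (J0 *m Ck *m J0) *m u.
  by rewrite !mulmxA.
have -> : adjmx u *m (J0 *m Ck) *m J0 *m (Ck *m J0 *m u) =
    adjmx u *m (J0 *m Ck *m J0 *m Ck *m J0) *m u by rewrite !mulmxA.
have conjB : Num.conj (1 - a) = 1 - Num.conj a by rewrite rmorphB rmorph1.
rewrite jCj jCjCj normCK conjB.
ring.
Qed.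

Lemma idiv_add_conj_lt0 (l : C) : lowerHP l -> 'i / l + Num.conj ('i / l) < 0.
Proof.
move=> hl; have : complex.Re ('i / l) < 0.
  case: l hl => x y; rewrite /lowerHP /= => y0.
  by rewrite mul0r mul1r sub0r opprK pmulr_llt0 // invr_gt0 !expr2; nra.
change ((complex.Re ('i / l) < 0) -> 'i / l + conjc ('i / l) < 0).
by rewrite addcJ pmulr_rlt0 ?ltr0n // -ltcR.
Qed.

Lemma step_jcone k l (u : 'cV[C]_(p + p)) : normalized k -> lowerHP l ->
  jquad u <= 0 -> jquad (step k l *m u) <= 0 /\ (u != 0 -> step k l *m u != 0).
Proof.
move=> bJ hl uj; have := jquad_step ('i / l) u bJ; rewrite -/(step k l).
set a := 'i / l; set z := cnorm2 _ => E.
have a_lt0 : 2%:R * (a + Num.conj a) < 0 by rewrite pmulr_rlt0 ?ltr0n // idiv_add_conj_lt0.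
have t1 : `|1 - a| ^+ 2 * jquad u <= 0 := mulr_ge0_le0 (exprn_ge0 2 (normr_ge0 _)) uj.
have t2 : 2%:R * (a + Num.conj a) * z <= 0 := mulr_le0_ge0 (ltW a_lt0) (cnorm2_ge0 _).
split=> [|u0]; first by rewrite E -[0]addr0 lerD.
apply/eqP => Fu0.
have /eqP : `|1 - a| ^+ 2 * jquad u + 2%:R * (a + Num.conj a) * z = 0.
  by rewrite -E Fu0 /jquad mulmx0 mxE.
rewrite naddr_eq0 // => /andP[_]; rewrite mulf_eq0 (lt_eqF a_lt0) cnorm2_eq0 => /eqP g0.
have : step k l *m u = (1 - a) *: u.
  rewrite /step mulmxDl mul1mx -scalemxAl CmxE.
  have -> : (2%:R *: (adjmx (gamma k) *m gamma k) - j) *m j *m u =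
      2%:R *: (adjmx (gamma k) *m (gamma k *m j *m u)) - j *m j *m u.
    by rewrite !mulmxBl -!scalemxAl !mulmxA.
  by rewrite g0 mulmx0 scaler0 sub0r jmx_sq mul1mx scalerN scalerBl scale1r.
rewrite Fu0 => /esym/eqP; rewrite scaler_eq0 (negbTE u0) orbF subr_eq0 => /eqP a1.
move: a_lt0; rewrite -a1 conjC1 => two_lt0.
have : 0 <= 2%:R * (1 + 1) :> C by rewrite mulr_ge0 ?ler0n ?addr_ge0 ?ler01.
by move/le_lt_trans/(_ two_lt0); rewrite ltxx.
Qed.

Lemma transfer_jcone M n l (u : 'cV[C]_(p + p)) :
  normalized_on M n -> lowerHP l -> jquad u <= 0 ->
  jquad (transfer M n l *m u) <= 0 /\ (u != 0 -> transfer M n l *m u != 0).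
Proof.
elim: n u => [|n IH] u bJ hl uj /=; first by rewrite !mul1mx.
have bJn : normalized (M + n).+1 by apply: bJ; rewrite addnS ltnS leq_addr leqnn.
have [Fuj Fu0] := step_jcone bJn hl uj.
have [PFuj PFu0] : jquad (transfer M n l *m (step (M + n).+1 l *m u)) <= 0 /\
    (step (M + n).+1 l *m u != 0 -> transfer M n l *m (step (M + n).+1 l *m u) != 0).
  by apply: IH Fuj => // k /andP[Mk kn]; apply: bJ; rewrite Mk addnS ltnW.
by rewrite -!mulmxA; split=> // /Fu0.
Qed.

Definition admissible_pair (Rm Qm : 'M[C]_p) : Prop :=
  posdefmx (adjmx Rm *m Rm + adjmx Qm *m Qm) /\ psdmx (adjmx Qm *m Qm - adjmx Rm *m Rm).

Lemma admissible_pairP (Y : 'M[C]_(p + p, p)) :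
  admissible_pair (usubmx Y) (dsubmx Y) <->
  (forall v : 'cV[C]_p, v != 0 -> Y *m v != 0) /\ (forall v : 'cV[C]_p, jquad (Y *m v) <= 0).
Proof.
have gram : adjmx (usubmx Y) *m usubmx Y + adjmx (dsubmx Y) *m dsubmx Y = adjmx Y *m Y.
  by rewrite -[in RHS](vsubmxK Y) adjmx_col mul_row_col.
have jgram : adjmx (dsubmx Y) *m dsubmx Y - adjmx (usubmx Y) *m usubmx Y =
    - (adjmx Y *m j *m Y).
  rewrite -[in RHS](vsubmxK Y) adjmx_col /jmx mul_row_block !mulmx0 !addr0 !add0r.
  by rewrite mulmx1 mulmxN mulmx1 mul_row_col mulNmx opprB.
have cnormE (v : 'cV[C]_p) : (adjmx v *m (adjmx Y *m Y) *m v) 0 0 = cnorm2 (Y *m v).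
  by rewrite /cnorm2 adjmxM !mulmxA.
have jquadE (v : 'cV[C]_p) : (adjmx v *m - (adjmx Y *m j *m Y) *m v) 0 0 = - jquad (Y *m v).
  by rewrite mulmxN mulNmx mxE /jquad adjmxM !mulmxA.
rewrite /admissible_pair /posdefmx /psdmx gram jgram.
split=> [[pd psd]|[inj cone]]; split=> v.
- by move=> /pd; rewrite cnormE lt0r cnorm2_eq0 => /andP[].
- by have := psd v; rewrite jquadE oppr_ge0.
- by move=> /inj Yv0; rewrite cnormE lt0r cnorm2_eq0 Yv0 cnorm2_ge0.
- by rewrite jquadE oppr_ge0.
Qed.

Lemma admissible_pair_transfer M n l (Y : 'M[C]_(p + p, p)) :
  normalized_on M n -> lowerHP l -> admissible_pair (usubmx Y) (dsubmx Y) ->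
  admissible_pair (usubmx (transfer M n l *m Y)) (dsubmx (transfer M n l *m Y)).
Proof.
move=> bJ hl /admissible_pairP[inj cone]; apply/admissible_pairP.
split=> [v v0|v]; rewrite -mulmxA; have [Pj Pinj] := transfer_jcone (u := Y *m v) bJ hl (cone v).
  exact/Pinj/inj.
exact: Pj.
Qed.

Lemma mx_holo_at_step k z : z != 0 -> mx_holo_at (step k) z.
Proof.
move=> z0; apply: mx_holo_atD; first exact: mx_holo_at_cst.
by apply: mx_holo_atZ; [exact: derivable_cdiv | exact: mx_holo_at_cst].
Qed.

Lemma mx_holo_at_transfer M n z : z != 0 -> mx_holo_at (transfer M n) z.
Proof.
move=> z0; elim: n => [|n IH]; first exact: mx_holo_at_cst.
exact: mx_holo_atM IH (mx_holo_at_step _ z0).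
Qed.

Lemma mx_holo_at_step_inv k z : z != 0 -> z != 'i -> z != - 'i ->
  mx_holo_at (step_inv k) z.
Proof.
move=> z0 zi zNi.
have dc : derivable (fun w : C^o => w ^+ 2 * ((w - 'i)^-1 * (w + 'i)^-1) : C^o) z 1.
  have -> : (fun w : C^o => w ^+ 2 * ((w - 'i)^-1 * (w + 'i)^-1) : C^o) =
      (fun w : C^o => (w - 0) ^+ 2 : C^o) *
      ((fun w : C^o => (w - 'i)^-1 : C^o) * (fun w : C^o => (w - - 'i)^-1 : C^o)).
    by rewrite !mulrfctE; apply/funext => w; rewrite subr0 opprK.
  apply: derivableM; first exact: derivable_subX.
  by apply: derivableM; exact: derivable_subV.
have -> : step_inv k = fun w =>
    (w ^+ 2 * ((w - 'i)^-1 * (w + 'i)^-1)) *: (1%:M + (- 'i / w) *: (Cm k *m j)).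
  by apply/funext => w; rewrite mulNr scaleNr.
apply: mx_holo_atZ dc _; apply: mx_holo_atD; first exact: mx_holo_at_cst.
by apply: mx_holo_atZ; [exact: derivable_cdiv | exact: mx_holo_at_cst].
Qed.

Lemma mx_holo_at_transfer_inv M n z : z != 0 -> z != 'i -> z != - 'i ->
  mx_holo_at (transfer_inv M n) z.
Proof.
move=> z0 zi zNi; elim: n => [|n IH]; first exact: mx_holo_at_cst.
exact: mx_holo_atM (mx_holo_at_step_inv _ z0 zi zNi) IH.
Qed.

Lemma mx_regular_at_transfer M n l : l != 0 -> mx_regular_at (transfer M n) l.
Proof.
move=> l0; apply/mx_regular_atP; apply: filterS (near_neq l0) => w.
exact: mx_holo_at_transfer.
Qed.

Lemma mx_regular_at_transfer_inv M n l : l != 0 -> l != 'i -> l != - 'i ->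
  mx_regular_at (transfer_inv M n) l.
Proof.
move=> l0 li lNi; apply/mx_regular_atP; near=> w.
apply: mx_holo_at_transfer_inv; near: w; exact: near_neq.
Unshelve. all: by end_near.
Qed.

Definition transfer_pair M n (Rf Qf : C -> 'M[C]_p) (w : C) : 'M[C]_(p + p, p) :=
  transfer M n w *m col_mx (Rf w) (Qf w).

Lemma mx_mero_on_transfer_pair M n (Rf Qf : C -> 'M[C]_p) :
  mx_mero_on (@lowerHP R) Rf -> mx_mero_on (@lowerHP R) Qf ->
  mx_mero_on (@lowerHP R) (transfer_pair M n Rf Qf).
Proof.
move=> Rm Qm; apply: mx_mero_onM (mx_mero_on_col Rm Qm) => l /lowerHP_neq0.
exact: mx_regular_at_transfer.
Qed.

Lemma mx_regular_at_transfer_pair M n (Rf Qf : C -> 'M[C]_p) l : l != 0 ->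
  mx_regular_at Rf l -> mx_regular_at Qf l ->
  mx_regular_at (transfer_pair M n Rf Qf) l.
Proof.
move=> l0 Rl Ql; apply: mx_regular_atM (mx_regular_at_col Rl Ql).
exact: mx_regular_at_transfer.
Qed.

Lemma mx_regular_at_transfer_pair_inv M n (Rf Qf : C -> 'M[C]_p) l :
  normalized_on M n -> l != 0 -> l != 'i -> l != - 'i ->
  mx_regular_at (fun w => usubmx (transfer_pair M n Rf Qf w)) l ->
  mx_regular_at (fun w => dsubmx (transfer_pair M n Rf Qf w)) l ->
  mx_regular_at Rf l /\ mx_regular_at Qf l.
Proof.
move=> bJ l0 li lNi R'l Q'l.
have : mx_regular_at (fun w => col_mx (Rf w) (Qf w)) l.
  apply: mx_regular_at_near_eq (mx_regular_atM (mx_regular_at_transfer_inv M n l0 li lNi)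
    (mx_regular_at_col R'l Q'l)).
  near=> w; rewrite vsubmxK mulmxA transfer_invK ?mul1mx //; near: w; exact: near_neq.
move=> /[dup] /mx_regular_at_usub Rl /mx_regular_at_dsub Ql.
by split; [move: Rl | move: Ql]; under eq_fun do rewrite ?col_mxKu ?col_mxKd.
Unshelve. all: by end_near.
Qed.

Lemma calW_transfer_pair M n (Rf Qf : C -> 'M[C]_p) l :
  calW beta M l *m transfer_pair M n Rf Qf l = calW beta (M + n) l *m col_mx (Rf l) (Qf l).
Proof.
rewrite /transfer_pair; apply: etrans (mulmxA _ _ _) _; congr (_ *m _).
exact: esym (calW_transfer M n l).
Qed.

End Transfer.

Unset Implicit Arguments.

Theorem proposition5p7 (R : realType) (p : nat) (M N : nat)
  (beta : nat -> 'M[R[i]]_(p, p + p)) :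
  (0 < p)%N -> (M < N)%N ->
  (forall k, (k <= N)%N ->
     beta k *m Jmx R p *m adjmx (beta k) = 1%:M) ->
  forall phi : R[i] -> 'M[R[i]]_p,
    WeylSet beta N phi -> WeylSet beta M phi.
Proof.
move=> _ MN bJ phi [phi_holo [Rf [Qf [Rm [Qm [Ri [Qi [Rpos [S [Sd RQS]]]]]]]]]].
set n := (N - M)%N; have NE : N = (M + n)%N by rewrite subnKC // ltnW.
have bJn k : (M < k <= M + n)%N -> beta k *m Jmx R p *m adjmx (beta k) = 1%:M.
  by move=> /andP[_]; rewrite -NE; exact: bJ.
pose Y := transfer_pair beta M n Rf Qf.
have Ym := mx_mero_on_transfer_pair beta M n Rm Qm.
have Yi := mx_regular_at_transfer_pair beta M n (lowerHP_neq0 (lowerHP_Ni R)) Ri Qi.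
split=> //; exists (fun w => usubmx (Y w)), (fun w => dsubmx (Y w)).
split; first exact: mx_mero_on_usub Ym.
split; first exact: mx_mero_on_dsub Ym.
split; first exact: mx_regular_at_usub Yi.
split; first exact: mx_regular_at_dsub Yi.
split=> [l hl R'l Q'l|].
  (* F_k(-i) is singular: at -i the regularity of Rf, Qf is an assumption. *)
  have [Rl Ql] : mx_regular_at Rf l /\ mx_regular_at Qf l.
    have [->|lNi] := eqVneq l (- 'i); first by [].
    exact: mx_regular_at_transfer_pair_inv bJn (lowerHP_neq0 hl) (lowerHP_neqi hl) lNi R'l Q'l.
  by apply: (admissible_pair_transfer bJn hl); rewrite col_mxKu col_mxKd; exact: (Rpos l hl Rl Ql).
exists S; split=> // l hl /(RQS l hl) [Rl [Ql DU]].
have Yl := mx_regular_at_transfer_pair beta M n (lowerHP_neq0 hl) Rl Ql.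
split; first exact: mx_regular_at_usub.
split; first exact: mx_regular_at_dsub.
rewrite /= !usubmx_mul_col !dsubmx_mul_col vsubmxK calW_transfer_pair -NE.
by rewrite -usubmx_mul_col -dsubmx_mul_col.
Qed.
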